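(* Fix $2<p<\infty$ and constants $c,c',c''>0$. There is $C$ depending only on $p,c,c''$ such that: if a square $Q$ satisfies $\mathbf{R}(c,c',c'')$ relative to a finite set $E_0\subset\mathbb{R}^2$, then $\|Q\cap E_0\|_{\dot B}\ge C^{-1}\delta_Q^{2/p-1}$.
   Context: A square $Q$ is a closed axis-parallel square with side length $\delta_Q$. The Besov seminorm of a set $\Omega$ is $\|\Omega\|_{\dot B}=\inf\{\|\varphi\|_{\dot B(\mathbb{R})}\}$ over Euclidean coordinates $(z_1,z_2)$ and $\varphi$ with $\Omega\subset\{(z_1,\varphi(z_1))_{z_1z_2}\}$, where $\|\varphi\|_{\dot B(\mathbb{R})}=\big(\iint\frac{|\varphi'(x)-\varphi'(y)|^p}{|x-y|^p}dxdy\big)^{1/p}$. Roughness: $Q$ satisfies $\mathbf{R}(c,c',c'')$ relative to $E_0$ iff (R1) there exist $x_1,x_2,y_1,y_2\in E_0\cap Q$ with $x_1\ne x_2$, $y_1\ne y_2$ and $\min\{|v_1-v_2|,|v_1+v_2|\}>c''$ where $v_1=\frac{x_1-x_2}{|x_1-x_2|}$, $v_2=\frac{y_1-y_2}{|y_1-y_2|}$; or (R2) $c\,\delta_Q^{2/p-1}\le\|E_0\cap Q\|_{\dot B}\le c'\delta_Q^{2/p-1}$. *)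

From Stdlib Require Import Reals Lra Lia List ClassicalEpsilon.
Open Scope R_scope.

Inductive ER : Type := Fin (r : R) | PInf.

Definition ER_le (u v : ER) : Prop :=
  match u, v with
  | _, PInf => True
  | PInf, Fin _ => False
  | Fin a, Fin b => a <= b
  end.

Definition is_sup_ER (S : R -> Prop) (v : ER) : Prop :=
  match v with
  | Fin r => is_lub S r
  | PInf => forall M : R, exists K, S K /\ M < K
  end.

Definition ER_sup (S : R -> Prop) : ER :=
  epsilon (inhabits PInf) (is_sup_ER S).

Definition is_glb_ER (S : ER -> Prop) (v : ER) : Prop :=
  (forall w, S w -> ER_le v w) /\
  (forall u, (forall w, S w -> ER_le u w) -> ER_le u v).

Definition ER_inf (S : ER -> Prop) : ER :=
  epsilon (inhabits PInf) (is_glb_ER S).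

(* real power with the convention 0^a = 0 (for a > 0) *)
Definition rpow (x a : R) : R :=
  if Rlt_dec 0 x then Rpower x a else 0.

Fixpoint sumN (n : nat) (g : nat -> R) : R :=
  match n with
  | O => 0
  | S k => sumN k g + g k
  end.

(* Lebesgue integral over R^2 of a nonnegative lower semicontinuous
   function, computed as the supremum of lower step sums over uniform
   N x N grids of squares [-Rr,Rr]^2 (m i j is any lower bound of f on
   the closed cell (i,j)). *)
Definition lower_sums (f : R -> R -> R) (K : R) : Prop :=
  exists (Rr : R) (N : nat) (m : nat -> nat -> R),
    0 < Rr /\
    (forall (i j : nat) (x y : R), (i < N)%nat -> (j < N)%nat ->
       - Rr + INR i * (2 * Rr / INR N) <= x <= - Rr + INR (S i) * (2 * Rr / INR N) ->
       - Rr + INR j * (2 * Rr / INR N) <= y <= - Rr + INR (S j) * (2 * Rr / INR N) ->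
       m i j <= f x y) /\
    K = sumN N (fun i => sumN N (fun j =>
          (2 * Rr / INR N) * (2 * Rr / INR N) * m i j)).

Definition integral2 (f : R -> R -> R) : ER := ER_sup (lower_sums f).

(* integrand |phi'(x)-phi'(y)|^p / |x-y|^p (set to 0 on the diagonal) *)
Definition besov_integrand (p : R) (dphi : R -> R) (x y : R) : R :=
  if Req_dec_T x y then 0
  else rpow (Rabs (dphi x - dphi y)) p / rpow (Rabs (x - y)) p.

(* ||phi||_{\dot B(R)} = (iint ...)^{1/p}, for phi with derivative dphi *)
Definition besov_fn_norm (p : R) (dphi : R -> R) : ER :=
  match integral2 (besov_integrand p dphi) with
  | Fin r => Fin (rpow r (1 / p))
  | PInf => PInf
  end.

(* Euclidean coordinates (z1,z2) of the point P in the orthonormal frame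
   with origin a, first axis at angle th, orientation given by b. *)
Definition coords (a : R * R) (th : R) (b : bool) (P : R * R) : R * R :=
  let u := fst P - fst a in
  let w := snd P - snd a in
  (u * cos th + w * sin th,
   (if b then 1 else -1) * (- u * sin th + w * cos th)).

(* Besov seminorm of a set Omega in R^2: infimum over Euclidean coordinate
   systems and C^1 functions phi whose graph (in those coordinates)
   contains Omega. *)
Definition besov_set_values (p : R) (Om : R * R -> Prop) (v : ER) : Prop :=
  exists (a : R * R) (th : R) (b : bool) (phi dphi : R -> R),
    (forall x, derivable_pt_lim phi x (dphi x)) /\
    continuity dphi /\
    (forall P, Om P -> snd (coords a th b P) = phi (fst (coords a th b P))) /\
    v = besov_fn_norm p dphi.

Definition besov_set_norm (p : R) (Om : R * R -> Prop) : ER :=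
  ER_inf (besov_set_values p Om).

Definition in_square (q : R * R) (delta : R) (P : R * R) : Prop :=
  fst q <= fst P <= fst q + delta /\ snd q <= snd P <= snd q + delta.

Definition E0Q (E0 : list (R * R)) (q : R * R) (delta : R) (P : R * R) : Prop :=
  In P E0 /\ in_square q delta P.

Definition norm2 (u : R * R) : R := sqrt (fst u ^ 2 + snd u ^ 2).
Definition vsub (u w : R * R) : R * R := (fst u - fst w, snd u - snd w).
Definition vadd (u w : R * R) : R * R := (fst u + fst w, snd u + snd w).
Definition unit_dir (x1 x2 : R * R) : R * R :=
  let d := vsub x1 x2 in (fst d / norm2 d, snd d / norm2 d).

Definition rough (p c c' c'' : R) (E0 : list (R * R)) (q : R * R) (delta : R) : Prop :=
  (exists x1 x2 y1 y2,
     E0Q E0 q delta x1 /\ E0Q E0 q delta x2 /\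
     E0Q E0 q delta y1 /\ E0Q E0 q delta y2 /\
     x1 <> x2 /\ y1 <> y2 /\
     Rmin (norm2 (vsub (unit_dir x1 x2) (unit_dir y1 y2)))
          (norm2 (vadd (unit_dir x1 x2) (unit_dir y1 y2))) > c'')
  \/
  (ER_le (Fin (c * Rpower delta (2 / p - 1))) (besov_set_norm p (E0Q E0 q delta)) /\
   ER_le (besov_set_norm p (E0Q E0 q delta)) (Fin (c' * Rpower delta (2 / p - 1)))).

From Stdlib Require Import Reals List.
From Stdlib Require Import Lra Lia Classical ClassicalEpsilon.
Open Scope R_scope.

(* Under (R2) the bound is part of the hypothesis.  Under (R1), take any
   chart: Euclidean coordinates and a C^1 function [phi] whose graph contains
   [E0 ∩ Q].  By the mean value theorem the chords [x1 x2] and [y1 y2] have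
   slopes [phi'(xi1)], [phi'(xi2)] with [|xi1 - xi2| <= 2 delta], and since
   [|u - v| |u + v| = 2 |sin (u, v)|] for unit vectors, the roughness condition
   forces [|phi'(xi1) - phi'(xi2)| > c''^2 / 2].

   On the other hand the Besov space embeds into a Hölder space (Morrey):
   [|g b - g a| <= C_p (b - a)^(1 - 2/p) ||g||_B] for continuous [g].  The
   averages of [g] over two intervals of length [~ l] at distance [~ l]
   differ, by Chebyshev's inequality on the double integral, by
   [O(l^(1 - 2/p) ||g||_B)], and chaining such averages over dyadic scales
   towards [a] and [b] gives a convergent geometric series.  As the double
   integral is a supremum of lower step sums on uniform grids, averages are
   taken over grid cells, with an error controlled by uniform continuity.
   With [g = phi'] this yields [c''^2 / 2 <= C_p (2 delta)^(1 - 2/p) ||phi||_B]. *)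

Lemma sumN_ext n f g : (forall i, (i < n)%nat -> f i = g i) -> sumN n f = sumN n g.
Proof.
  induction n as [|n IH]; intros Hfg; simpl; [reflexivity|].
  rewrite IH by (intros; apply Hfg; lia). rewrite Hfg by lia. reflexivity.
Qed.

Lemma sumN_le n f g : (forall i, (i < n)%nat -> f i <= g i) -> sumN n f <= sumN n g.
Proof.
  induction n as [|n IH]; intros Hfg; simpl; [lra|].
  apply Rplus_le_compat; [apply IH; intros; apply Hfg|apply Hfg]; lia.
Qed.

Lemma sumN_add n f g : sumN n (fun i => f i + g i) = sumN n f + sumN n g.
Proof. induction n as [|n IH]; simpl; [|rewrite IH]; ring. Qed.

Lemma sumN_sub n f g : sumN n (fun i => f i - g i) = sumN n f - sumN n g.
Proof. induction n as [|n IH]; simpl; [|rewrite IH]; ring. Qed.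

Lemma sumN_scal n c f : sumN n (fun i => c * f i) = c * sumN n f.
Proof. induction n as [|n IH]; simpl; [|rewrite IH]; ring. Qed.

Lemma sumN_const n c : sumN n (fun _ => c) = c * INR n.
Proof. induction n as [|n IH]; simpl sumN; [simpl; ring|rewrite IH, S_INR; ring]. Qed.

Lemma Rabs_sumN_le n f : Rabs (sumN n f) <= sumN n (fun i => Rabs (f i)).
Proof.
  induction n as [|n IH]; simpl; [rewrite Rabs_R0; lra|].
  eapply Rle_trans; [apply Rabs_triang|lra].
Qed.

Lemma Rabs_sub_le_sumN_steps n (x : nat -> R) :
  Rabs (x O - x n) <= sumN n (fun k => Rabs (x (S k) - x k)).
Proof.
  induction n as [|n IH]; simpl; [unfold Rminus; rewrite Rplus_opp_r, Rabs_R0; lra|].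
  replace (x O - x (S n)) with ((x O - x n) - (x (S n) - x n)) by ring.
  eapply Rle_trans; [apply Rabs_triang|]. rewrite Rabs_Ropp. lra.
Qed.

Lemma sumN_geom_le n q : 0 <= q < 1 -> sumN n (fun k => q ^ k) <= / (1 - q).
Proof.
  intros Hq.
  assert (Hclosed : sumN n (fun k => q ^ k) * (1 - q) = 1 - q ^ n).
  { induction n as [|n IH]; simpl; [ring|]. rewrite Rmult_plus_distr_r, IH. ring. }
  assert (0 <= q ^ n) by (apply pow_le; lra).
  apply Rmult_le_reg_r with (1 - q); [lra|]. rewrite Hclosed, Rinv_l by lra. lra.
Qed.

Lemma sumN_sumN_weighted_sub n (a b G : nat -> R) :
  sumN n (fun i => sumN n (fun j => a i * b j * (G i - G j))) =
  sumN n b * sumN n (fun i => a i * G i) - sumN n a * sumN n (fun j => b j * G j).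
Proof.
  transitivity (sumN n (fun i => a i * G i * sumN n b - a i * sumN n (fun j => b j * G j))).
  - apply sumN_ext; intros i _. rewrite <- !sumN_scal, <- sumN_sub.
    apply sumN_ext; intros; ring.
  - rewrite sumN_sub.
    rewrite (sumN_ext n _ (fun i => sumN n b * (a i * G i))) by (intros; ring).
    rewrite (sumN_ext n (fun i => a i * _) (fun i => sumN n (fun j => b j * G j) * a i))
      by (intros; ring).
    rewrite !sumN_scal. ring.
Qed.

Lemma sumN_sumN_mul_const n (a b : nat -> R) c :
  sumN n (fun i => sumN n (fun j => a i * b j * c)) = sumN n a * sumN n b * c.
Proof.
  rewrite (sumN_ext n _ (fun i => (c * sumN n b) * a i)).
  - rewrite sumN_scal. ring.
  - intros i _. rewrite <- sumN_scal, Rmult_comm, <- sumN_scal.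
    apply sumN_ext; intros; ring.
Qed.

Lemma exists_is_sup_ER (S : R -> Prop) : (exists x, S x) -> exists v, is_sup_ER S v.
Proof.
  intros Hne. destruct (classic (bound S)) as [Hb|Hb].
  - destruct (completeness S Hb Hne) as [m Hm]. now exists (Fin m).
  - exists PInf. intros M. apply NNPP; intros HM. apply Hb. exists M. intros x Hx.
    destruct (Rle_dec x M); [assumption|]. exfalso. apply HM. exists x. split; [|lra]. exact Hx.
Qed.

Lemma lower_sums_0 f : lower_sums f 0.
Proof. exists 1, O, (fun _ _ => 0). repeat split; [lra|intros; lia]. Qed.

Lemma integral2_lower_sum_le f r K : integral2 f = Fin r -> lower_sums f K -> K <= r.
Proof.
  intros Hr HK.
  destruct (exists_is_sup_ER (lower_sums f) (ex_intro _ 0 (lower_sums_0 f))) as [v Hv].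
  pose proof (epsilon_spec (inhabits PInf) _ (ex_intro _ v Hv)) as Hsup.
  fold (ER_sup (lower_sums f)) in Hsup. fold (integral2 f) in Hsup. rewrite Hr in Hsup.
  destruct Hsup as [Hub _]. now apply Hub.
Qed.

Lemma integral2_nonneg f r : integral2 f = Fin r -> 0 <= r.
Proof. intros Hr. exact (integral2_lower_sum_le f r 0 Hr (lower_sums_0 f)). Qed.

Lemma exists_is_glb_ER (S : ER -> Prop) :
  (forall r, S (Fin r) -> 0 <= r) -> exists v, is_glb_ER S v.
Proof.
  intros Hpos. destruct (classic (exists r, S (Fin r))) as [[r0 Hr0]|Hno].
  - set (E := fun x => S (Fin (- x))).
    assert (Hb : bound E) by (exists 0; intros x Hx; apply Hpos in Hx; lra).
    assert (Hn : exists x, E x) by (exists (- r0); unfold E; now rewrite Ropp_involutive).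
    destruct (completeness E Hb Hn) as [m [Hm1 Hm2]]. exists (Fin (- m)). split.
    + intros [w|] Hw; simpl; [|exact I].
      assert (E (- w)) as Hw' by (unfold E; now rewrite Ropp_involutive).
      apply Hm1 in Hw'. lra.
    + intros [u|] Hu; simpl.
      * enough (m <= - u) by lra. apply Hm2. intros x Hx. apply Hu in Hx. simpl in Hx. lra.
      * exact (Hu _ Hr0).
  - exists PInf. split.
    + intros [w|] Hw; simpl; [apply Hno; eauto|exact I].
    + intros [u|] Hu; simpl; exact I.
Qed.

Lemma ER_inf_ge (S : ER -> Prop) T : (forall r, S (Fin r) -> 0 <= r) ->
  (forall w, S w -> ER_le (Fin T) w) -> ER_le (Fin T) (ER_inf S).
Proof.
  intros Hpos Hlb. destruct (exists_is_glb_ER S Hpos) as [v Hv].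
  pose proof (epsilon_spec (inhabits PInf) (is_glb_ER S) (ex_intro _ v Hv)) as [_ Hglb].
  now apply Hglb.
Qed.

Lemma Rpower_pos x y : 0 < Rpower x y.
Proof. apply exp_pos. Qed.

Lemma rpow_nonneg x a : 0 <= rpow x a.
Proof. unfold rpow. destruct (Rlt_dec 0 x); [left; apply Rpower_pos|lra]. Qed.

Lemma rpow_pos x a : 0 < x -> rpow x a = Rpower x a.
Proof. intros Hx. unfold rpow. now destruct (Rlt_dec 0 x). Qed.

Lemma rpow_le_compat u v a : 0 < a -> 0 <= u <= v -> rpow u a <= rpow v a.
Proof.
  intros Ha [Hu Huv]. unfold rpow.
  destruct (Rlt_dec 0 u), (Rlt_dec 0 v); try lra.
  - apply Rle_Rpower_l; lra.
  - left; apply Rpower_pos.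
Qed.

Lemma Rpower_succ x a : 0 < x -> Rpower x a = x * Rpower x (a - 1).
Proof.
  intros Hx. replace a with (1 + (a - 1)) at 1 by ring.
  now rewrite Rpower_plus, Rpower_1.
Qed.

(* Either [z <= tau], or [z^p / tau^(p-1) >= z]. *)
Lemma le_add_rpow_div p z tau : 1 < p -> 0 <= z -> 0 < tau ->
  z <= tau + rpow z p / Rpower tau (p - 1).
Proof.
  intros Hp Hz Ht. pose proof (Rpower_pos tau (p - 1)) as Htp.
  destruct (Rle_dec z tau) as [Hle|Hgt].
  - enough (0 <= rpow z p / Rpower tau (p - 1)) by lra.
    apply Rmult_le_pos; [apply rpow_nonneg|left; now apply Rinv_0_lt_compat].
  - rewrite rpow_pos, Rpower_succ by lra.
    assert (Rpower tau (p - 1) <= Rpower z (p - 1)) by (apply Rle_Rpower_l; lra).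
    enough (z <= z * Rpower z (p - 1) / Rpower tau (p - 1)) by lra.
    apply Rmult_le_reg_r with (Rpower tau (p - 1)); [exact Htp|].
    unfold Rdiv. rewrite Rmult_assoc, Rinv_l by lra. nra.
Qed.

Definition holder_exp (p : R) : R := 1 - 2 / p.

Lemma holder_exp_pos p : 2 < p -> 0 < holder_exp p.
Proof.
  intros Hp. unfold holder_exp.
  enough (2 / p < 1) by lra. apply Rmult_lt_reg_r with p; [lra|].
  unfold Rdiv. rewrite Rmult_assoc, Rinv_l; lra.
Qed.

Lemma Rpower_half_lt_1 s : 0 < s -> 0 <= Rpower (/ 2) s < 1.
Proof.
  intros Hs. split; [left; apply Rpower_pos|].
  unfold Rpower. rewrite <- exp_0. apply exp_increasing.
  assert (ln (/ 2) < 0) by (rewrite <- ln_1; apply ln_increasing; lra). nra.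
Qed.

Lemma Rpower_mul_half_pow c s k : 0 < c ->
  Rpower (c * (/ 2) ^ k) s = Rpower c s * Rpower (/ 2) s ^ k.
Proof.
  intros Hc. rewrite <- Rpower_mult_distr by (try apply pow_lt; lra). f_equal.
  rewrite <- (Rpower_pow k (Rpower (/ 2) s)) by apply Rpower_pos.
  rewrite <- (Rpower_pow k (/ 2)) by lra.
  rewrite !Rpower_mult. f_equal; ring.
Qed.

Definition excess (eps : R) (G : nat -> R) (i j : nat) : R :=
  Rmax 0 (Rabs (G i - G j) - 2 * eps).

(* Each pair [(i, j)] contributes [2 eps + tau] plus, by [le_add_rpow_div],
   a Chebyshev remainder. *)
Lemma weighted_avg_sub_le p n (a b G : nat -> R) eps tau :
  1 < p -> 0 < tau ->
  (forall i, 0 <= a i) -> (forall j, 0 <= b j) -> 0 < sumN n a -> 0 < sumN n b ->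
  Rabs (sumN n (fun i => a i * G i) / sumN n a - sumN n (fun j => b j * G j) / sumN n b)
  <= 2 * eps + tau +
     sumN n (fun i => sumN n (fun j => a i * b j * rpow (excess eps G i j) p))
       / (sumN n a * sumN n b * Rpower tau (p - 1)).
Proof.
  intros Hp Ht Ha Hb HA HB.
  set (A := sumN n a) in *. set (B := sumN n b) in *.
  pose proof (Rpower_pos tau (p - 1)) as Htp.
  set (Z := sumN n (fun i => sumN n (fun j => a i * b j * rpow (excess eps G i j) p))).
  assert (Hpair : forall i j, Rabs (a i * b j * (G i - G j)) <=
      a i * b j * (2 * eps + tau) + / Rpower tau (p - 1) * (a i * b j * rpow (excess eps G i j) p)).
  { intros i j. assert (0 <= a i * b j) by (apply Rmult_le_pos; auto).
    rewrite Rabs_mult, Rabs_right by lra.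
    assert (Hz : 0 <= excess eps G i j) by apply Rmax_l.
    pose proof (le_add_rpow_div p _ tau Hp Hz Ht).
    assert (Rabs (G i - G j) <= 2 * eps + excess eps G i j)
      by (pose proof (Rmax_r 0 (Rabs (G i - G j) - 2 * eps)); unfold excess; lra).
    replace (a i * b j * (2 * eps + tau)
             + / Rpower tau (p - 1) * (a i * b j * rpow (excess eps G i j) p))
      with (a i * b j * (2 * eps + tau + rpow (excess eps G i j) p / Rpower tau (p - 1)))
      by (field; lra).
    apply Rmult_le_compat_l; lra. }
  assert (Hkey : Rabs (B * sumN n (fun i => a i * G i) - A * sumN n (fun j => b j * G j))
                 <= A * B * (2 * eps + tau) + / Rpower tau (p - 1) * Z).
  { unfold A, B, Z. rewrite <- sumN_sumN_weighted_sub, <- sumN_sumN_mul_const, <- !sumN_scal.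
    eapply Rle_trans; [apply Rabs_sumN_le|]. rewrite <- sumN_add. apply sumN_le; intros i _.
    eapply Rle_trans; [apply Rabs_sumN_le|]. rewrite <- sumN_scal, <- sumN_add.
    apply sumN_le; intros j _. apply Hpair. }
  replace (sumN n (fun i => a i * G i) / A - sumN n (fun j => b j * G j) / B)
    with ((B * sumN n (fun i => a i * G i) - A * sumN n (fun j => b j * G j)) / (A * B))
    by (field; lra).
  unfold Rdiv at 1. rewrite Rabs_mult, Rabs_inv, (Rabs_right (A * B)) by nra.
  apply Rmult_le_reg_r with (A * B); [nra|]. rewrite Rmult_assoc, Rinv_l by nra.
  replace ((2 * eps + tau + Z / (A * B * Rpower tau (p - 1))) * (A * B))
    with (A * B * (2 * eps + tau) + / Rpower tau (p - 1) * Z) by (field; split; nra).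
  lra.
Qed.

Definition indic (lo hi i : nat) : R := if andb (Nat.leb lo i) (Nat.ltb i hi) then 1 else 0.

Lemma indic_cases lo hi i : (indic lo hi i = 1 /\ (lo <= i < hi)%nat) \/ indic lo hi i = 0.
Proof.
  unfold indic. destruct (Nat.leb lo i) eqn:E1, (Nat.ltb i hi) eqn:E2; simpl; auto.
  left. apply Nat.leb_le in E1. apply Nat.ltb_lt in E2. auto.
Qed.

Lemma indic_nonneg lo hi i : 0 <= indic lo hi i.
Proof. destruct (indic_cases lo hi i) as [[-> _]| ->]; lra. Qed.

Lemma sumN_indic lo hi n : (lo <= hi <= n)%nat -> sumN n (indic lo hi) = INR hi - INR lo.
Proof.
  intros Hn. enough (forall m, sumN m (indic lo hi) = INR (Nat.min m hi) - INR (Nat.min m lo))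
    as -> by (f_equal; f_equal; lia).
  induction m as [|m IH]; [simpl; ring|]. cbn [sumN]. rewrite IH.
  destruct (indic_cases lo hi m) as [[-> Hm]|Hm].
  - replace (Nat.min (S m) hi) with (S (Nat.min m hi)) by lia.
    replace (Nat.min (S m) lo) with (Nat.min m lo) by lia. rewrite S_INR. ring.
  - assert (~ (lo <= m < hi)%nat) as Hout.
    { intros [H1 H2]. unfold indic in Hm.
      rewrite (proj2 (Nat.leb_le _ _) H1), (proj2 (Nat.ltb_lt _ _) H2) in Hm. simpl in Hm. lra. }
    rewrite Hm. destruct (Nat.le_gt_cases hi m).
    + replace (Nat.min (S m) hi) with (Nat.min m hi) by lia.
      replace (Nat.min (S m) lo) with (Nat.min m lo) by lia. ring.
    + replace (Nat.min (S m) hi) with (S (Nat.min m hi)) by lia.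
      replace (Nat.min (S m) lo) with (S (Nat.min m lo)) by lia. rewrite !S_INR. ring.
Qed.

Definition avg (n lo hi : nat) (G : nat -> R) : R :=
  sumN n (fun i => indic lo hi i * G i) / sumN n (indic lo hi).

Lemma avg_near n lo hi G c eta : (lo < hi <= n)%nat ->
  (forall i, (lo <= i < hi)%nat -> Rabs (G i - c) <= eta) -> Rabs (avg n lo hi G - c) <= eta.
Proof.
  intros Hn HG. unfold avg.
  assert (Hpos : 0 < sumN n (indic lo hi))
    by (rewrite sumN_indic by lia; apply Rlt_0_minus, lt_INR; lia).
  set (m := sumN n (indic lo hi)) in *.
  replace (sumN n (fun i => indic lo hi i * G i) / m - c)
    with (sumN n (fun i => indic lo hi i * (G i - c)) / m).
  2:{ rewrite (sumN_ext n _ (fun i => indic lo hi i * G i - c * indic lo hi i)) by (intros; ring).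
      rewrite sumN_sub, sumN_scal. fold m. field. lra. }
  unfold Rdiv. rewrite Rabs_mult, Rabs_inv, (Rabs_right m) by lra.
  apply Rmult_le_reg_r with m; [lra|]. rewrite Rmult_assoc, Rinv_l, Rmult_1_r by lra.
  eapply Rle_trans; [apply Rabs_sumN_le|]. unfold m. rewrite <- sumN_scal.
  apply sumN_le. intros i _. rewrite Rabs_mult.
  destruct (indic_cases lo hi i) as [[-> Hi]| ->].
  - rewrite Rabs_R1. specialize (HG i Hi). lra.
  - rewrite Rabs_R0. lra.
Qed.

Definition mesh (Rr : R) (N : nat) : R := 2 * Rr / INR N.

Definition grid_pt (Rr : R) (N i : nat) : R := - Rr + INR i * mesh Rr N.

Definition grid_osc_le (g : R -> R) (Rr : R) (N lo hi : nat) (eps : R) : Prop :=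
  forall i x, (lo <= i < hi)%nat -> grid_pt Rr N i <= x <= grid_pt Rr N (S i) ->
    Rabs (g x - g (grid_pt Rr N i)) <= eps.

Lemma mesh_pos Rr N : 0 < Rr -> (0 < N)%nat -> 0 < mesh Rr N.
Proof. intros. apply Rdiv_lt_0_compat; [lra|now apply lt_0_INR]. Qed.

Lemma grid_pt_S Rr N i : grid_pt Rr N (S i) = grid_pt Rr N i + mesh Rr N.
Proof. unfold grid_pt. rewrite S_INR. ring. Qed.

Lemma grid_pt_le Rr N i j : 0 < Rr -> (0 < N)%nat -> (i <= j)%nat ->
  grid_pt Rr N i <= grid_pt Rr N j.
Proof.
  intros HR HN Hij. pose proof (mesh_pos Rr N HR HN). apply le_INR in Hij.
  unfold grid_pt. nra.
Qed.

Lemma grid_pt_0 Rr N : grid_pt Rr N 0 = - Rr.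
Proof. unfold grid_pt. simpl. ring. Qed.

Lemma grid_pt_N Rr N : (0 < N)%nat -> grid_pt Rr N N = Rr.
Proof.
  intros HN. pose proof (lt_0_INR N HN). unfold grid_pt, mesh. field. lra.
Qed.

Lemma exists_bracket (t : nat -> R) x n :
  t O <= x < t n -> exists i, (i < n)%nat /\ t i <= x < t (S i).
Proof.
  induction n as [|n IH]; intros Hx; [lra|].
  destruct (Rlt_dec x (t n)) as [Hlt|Hge].
  - destruct IH as (i & Hi & Hti); [lra|]. exists i. split; [lia|exact Hti].
  - exists n. split; [lia|lra].
Qed.

Lemma grid_interval_inside Rr N u v : 0 < Rr -> (0 < N)%nat -> - Rr <= u -> v < Rr ->
  4 * mesh Rr N <= v - u ->
  exists lo hi, (lo < hi <= N)%nat /\ u <= grid_pt Rr N lo /\ grid_pt Rr N hi <= v /\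
    (v - u) / 2 <= (INR hi - INR lo) * mesh Rr N.
Proof.
  intros HR HN Hu Hv H4. pose proof (mesh_pos Rr N HR HN) as Hh.
  assert (Hends : grid_pt Rr N 0 = - Rr /\ grid_pt Rr N N = Rr)
    by (split; [apply grid_pt_0|now apply grid_pt_N]).
  destruct (exists_bracket (grid_pt Rr N) u N) as (i & Hi & Hui); [lra|].
  destruct (exists_bracket (grid_pt Rr N) v N) as (j & Hj & Hvj); [lra|].
  rewrite grid_pt_S in Hui, Hvj.
  assert (Hlen : (v - u) / 2 <= grid_pt Rr N j - grid_pt Rr N (S i))
    by (rewrite grid_pt_S; lra).
  replace (grid_pt Rr N j - grid_pt Rr N (S i)) with ((INR j - INR (S i)) * mesh Rr N)
    in Hlen by (unfold grid_pt; ring).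
  assert (Hij : (S i < j)%nat).
  { apply INR_lt. enough (0 < INR j - INR (S i)) by lra.
    apply Rmult_lt_reg_r with (mesh Rr N); [exact Hh|lra]. }
  exists (S i), j. repeat split; [lia|lia|rewrite grid_pt_S; lra|lra|exact Hlen].
Qed.

Lemma grid_osc_le_of_unif_cont g a b d eps Rr N lo hi :
  (forall x y, a <= x <= b -> a <= y <= b -> Rabs (x - y) < d -> Rabs (g x - g y) < eps) ->
  0 < Rr -> (0 < N)%nat -> mesh Rr N < d ->
  a <= grid_pt Rr N lo -> grid_pt Rr N hi <= b -> grid_osc_le g Rr N lo hi eps.
Proof.
  intros Hu HR HN Hh Ha Hb i x Hi Hx.
  assert (grid_pt Rr N lo <= grid_pt Rr N i) by (apply grid_pt_le; auto; lia).
  assert (grid_pt Rr N (S i) <= grid_pt Rr N hi) by (apply grid_pt_le; auto; lia).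
  rewrite grid_pt_S in *. left. apply Hu; try lra. rewrite Rabs_right; lra.
Qed.

Lemma besov_integrand_nonneg p g x y : 0 <= besov_integrand p g x y.
Proof.
  unfold besov_integrand. destruct (Req_dec_T x y); [lra|].
  apply Rmult_le_pos; [apply rpow_nonneg|]. apply Rlt_le, Rinv_0_lt_compat.
  rewrite rpow_pos by (apply Rabs_pos_lt; lra). apply Rpower_pos.
Qed.

Lemma besov_integrand_ge p g x y z Lam : 0 < p -> x <> y -> Rabs (x - y) <= Lam ->
  0 <= z <= Rabs (g x - g y) -> rpow z p / Rpower Lam p <= besov_integrand p g x y.
Proof.
  intros Hp Hxy HL Hz. unfold besov_integrand. destruct (Req_dec_T x y) as [|_]; [contradiction|].
  assert (Hd : 0 < Rabs (x - y)) by (apply Rabs_pos_lt; lra).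
  rewrite (rpow_pos (Rabs (x - y))) by exact Hd.
  pose proof (Rpower_pos (Rabs (x - y)) p).
  assert (Rpower (Rabs (x - y)) p <= Rpower Lam p) by (apply Rle_Rpower_l; lra).
  pose proof (rpow_nonneg z p). pose proof (rpow_le_compat z (Rabs (g x - g y)) p Hp Hz).
  unfold Rdiv. apply Rmult_le_compat; try lra.
  - left. apply Rinv_0_lt_compat, Rpower_pos.
  - now apply Rinv_le_contravar.
Qed.

(* The step function below is admissible in [lower_sums]: on the cell
   [(i, j)] of two separated grid intervals at distance at most [Lam], the
   oscillation bound makes [excess] a lower bound for [|g x - g y|]. *)
Lemma lower_sum_excess_le p g r Rr N lo1 hi1 lo2 hi2 eps Lam :
  0 < p -> 0 < Rr -> (0 < N)%nat ->
  (forall K, lower_sums (besov_integrand p g) K -> K <= r) ->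
  grid_pt Rr N hi1 < grid_pt Rr N lo2 -> grid_pt Rr N hi2 - grid_pt Rr N lo1 <= Lam ->
  grid_osc_le g Rr N lo1 hi1 eps -> grid_osc_le g Rr N lo2 hi2 eps ->
  mesh Rr N * mesh Rr N / Rpower Lam p *
  sumN N (fun i => sumN N (fun j => indic lo1 hi1 i * indic lo2 hi2 j *
     rpow (excess eps (fun k => g (grid_pt Rr N k)) i j) p)) <= r.
Proof.
  intros Hp HR HN Hr Hsep Hspan Hosc1 Hosc2.
  set (G := fun k => g (grid_pt Rr N k)).
  set (m := fun i j =>
    indic lo1 hi1 i * indic lo2 hi2 j * rpow (excess eps G i j) p / Rpower Lam p).
  eapply Rle_trans; [|apply Hr; exists Rr, N, m; split; [exact HR|split; [|reflexivity]]].
  - right. rewrite <- sumN_scal. apply sumN_ext; intros i _.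
    rewrite <- sumN_scal. apply sumN_ext; intros j _. unfold m, G, mesh, Rdiv. ring.
  - intros i j x y _ _ Hx Hy.
    change (grid_pt Rr N i <= x <= grid_pt Rr N (S i)) in Hx.
    change (grid_pt Rr N j <= y <= grid_pt Rr N (S j)) in Hy.
    unfold m. destruct (indic_cases lo1 hi1 i) as [[E1 Hi]|E1];
      [destruct (indic_cases lo2 hi2 j) as [[E2 Hj]|E2]|];
      rewrite ?E1, ?E2; unfold Rdiv; rewrite ?Rmult_0_r, ?Rmult_0_l;
      try apply besov_integrand_nonneg.
    assert (grid_pt Rr N lo1 <= grid_pt Rr N i) by (apply grid_pt_le; auto; lia).
    assert (grid_pt Rr N (S i) <= grid_pt Rr N hi1) by (apply grid_pt_le; auto; lia).
    assert (grid_pt Rr N lo2 <= grid_pt Rr N j) by (apply grid_pt_le; auto; lia).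
    assert (grid_pt Rr N (S j) <= grid_pt Rr N hi2) by (apply grid_pt_le; auto; lia).
    pose proof (Hosc1 i x Hi Hx). pose proof (Hosc2 j y Hj Hy).
    rewrite !Rmult_1_l. fold (rpow (excess eps G i j) p / Rpower Lam p).
    apply besov_integrand_ge; [exact Hp|lra|rewrite Rabs_left; lra|].
    split; [apply Rmax_l|]. apply Rmax_lub; [apply Rabs_pos|].
    unfold G. fold (grid_pt Rr N i) (grid_pt Rr N j).
    assert (forall u v w z : R, Rabs (u - v) <= Rabs (w - z) + Rabs (w - u) + Rabs (z - v))
      as Htri by (intros; unfold Rabs; repeat destruct Rcase_abs; lra).
    pose proof (Htri (g (grid_pt Rr N i)) (g (grid_pt Rr N j)) (g x) (g y)). lra.
Qed.

Lemma exists_fine_grid a b d : 0 < d -> exists Rr N,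
  0 < Rr /\ (0 < N)%nat /\ - Rr < a /\ b < Rr /\ mesh Rr N < d.
Proof.
  intros Hd. set (Rr := Rabs a + Rabs b + 1).
  pose proof (Rle_abs a). pose proof (Rle_abs b).
  pose proof (Rle_abs (- a)). pose proof (Rle_abs (- b)). rewrite Rabs_Ropp in *.
  assert (HR : 0 < Rr) by (unfold Rr; pose proof (Rabs_pos a); pose proof (Rabs_pos b); lra).
  destruct (INR_unbounded (2 * Rr / d)) as [N HN].
  assert (HN0 : (0 < N)%nat).
  { destruct N; [|lia]. simpl in HN. enough (0 < 2 * Rr / d) by lra.
    apply Rdiv_lt_0_compat; lra. }
  exists Rr, N. repeat split; [exact HR|exact HN0|unfold Rr; lra|unfold Rr; lra|].
  pose proof (lt_0_INR N HN0). unfold mesh.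
  apply Rmult_lt_reg_r with (INR N / d); [apply Rdiv_lt_0_compat; lra|].
  replace (2 * Rr / INR N * (INR N / d)) with (2 * Rr / d) by (field; lra).
  replace (d * (INR N / d)) with (INR N) by (field; lra). lra.
Qed.

Definition grid_interval_in (Rr : R) (N lo hi : nat) (u v : R) : Prop :=
  (lo < hi <= N)%nat /\ u <= grid_pt Rr N lo /\ grid_pt Rr N hi <= v /\
  (v - u) / 2 <= (INR hi - INR lo) * mesh Rr N.

Lemma grid_intervals_inside Rr N (u v : nat -> R) K : 0 < Rr -> (0 < N)%nat ->
  (forall k, (k <= K)%nat -> - Rr <= u k /\ v k < Rr /\ 4 * mesh Rr N <= v k - u k) ->
  exists lo hi : nat -> nat, forall k, (k <= K)%nat ->
    grid_interval_in Rr N (lo k) (hi k) (u k) (v k).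
Proof.
  intros HR HN Huv.
  assert (Hex : forall k, exists x : nat * nat, (k <= K)%nat ->
            grid_interval_in Rr N (fst x) (snd x) (u k) (v k)).
  { intros k. destruct (Nat.le_gt_cases k K) as [Hk|Hk]; [|exists (O, O); lia].
    destruct (Huv k Hk) as (Hu & Hv & Hlen).
    destruct (grid_interval_inside Rr N (u k) (v k) HR HN Hu Hv Hlen) as (lo & hi & Hin).
    now exists (lo, hi). }
  destruct (choice _ Hex) as [f Hf].
  exists (fun k => fst (f k)), (fun k => snd (f k)). exact Hf.
Qed.

(** * The Hölder estimate *)

Lemma Rpower_holder_scale p l rho : 0 < p -> 0 < l -> 0 < rho ->
  Rpower (4 * l) p * Rpower rho p =
  Rpower 4 p * (l * l) * Rpower (Rpower l (holder_exp p) * rho) p.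
Proof.
  intros Hp Hl Hrho.
  rewrite <- !Rpower_mult_distr by (try apply Rpower_pos; lra).
  rewrite Rpower_mult.
  replace (l * l) with (Rpower l 2)
    by (replace 2 with (INR 2) by (simpl; ring); rewrite Rpower_pow by exact Hl; simpl; ring).
  replace (holder_exp p * p) with (p - 2) by (unfold holder_exp; field; lra).
  replace (Rpower l p) with (Rpower l (2 + (p - 2))) by (f_equal; ring).
  rewrite Rpower_plus. ring.
Qed.

Lemma remainder_le Z h n1 n2 l A tau T : 0 < h -> 0 < n1 -> 0 < n2 -> 0 < T -> 0 < tau ->
  0 <= A -> 0 < l -> l / 4 <= n1 * h -> l / 4 <= n2 * h -> Z * (h * h) <= A * (l * l) * (tau * T) ->
  Z / (n1 * n2 * T) <= 16 * A * tau.
Proof.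
  intros Hh Hn1 Hn2 HT Htau HA Hl Hl1 Hl2 HZ.
  assert (Hnh : l * l / 16 <= (n1 * h) * (n2 * h)).
  { replace (l * l / 16) with ((l / 4) * (l / 4)) by field.
    apply Rmult_le_compat; lra. }
  apply Rmult_le_reg_r with (n1 * n2 * T * (h * h)).
  { apply Rmult_lt_0_compat; [apply Rmult_lt_0_compat; [nra|lra]|nra]. }
  replace (Z / (n1 * n2 * T) * (n1 * n2 * T * (h * h))) with (Z * (h * h))
    by (field; repeat split; lra).
  eapply Rle_trans; [exact HZ|].
  replace (16 * A * tau * (n1 * n2 * T * (h * h)))
    with (A * tau * T * (16 * ((n1 * h) * (n2 * h)))) by ring.
  replace (A * (l * l) * (tau * T)) with (A * tau * T * (16 * (l * l / 16))) by field.
  apply Rmult_le_compat_l; [|lra]. apply Rmult_le_pos; [apply Rmult_le_pos|]; nra.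
Qed.

Definition gap_const (p : R) : R := 1 + 16 * Rpower 4 p.

Lemma gap_const_pos p : 0 < gap_const p.
Proof. unfold gap_const. pose proof (Rpower_pos 4 p). lra. Qed.

Definition holder_const (p : R) : R := 6 * gap_const p / (1 - Rpower (/ 2) (holder_exp p)).

Lemma holder_const_pos p : 2 < p -> 0 < holder_const p.
Proof.
  intros Hp. pose proof (Rpower_half_lt_1 _ (holder_exp_pos p Hp)). pose proof (gap_const_pos p).
  unfold holder_const. apply Rdiv_lt_0_compat; lra.
Qed.

Lemma chain_bound (SA SB w : nat -> R) K e ga gb :
  (forall k, (k < K)%nat -> Rabs (SA (S k) - SA k) <= e + w k) ->
  (forall k, (k < K)%nat -> Rabs (SB (S k) - SB k) <= e + w k) ->
  Rabs (SA O - SB O) <= e + w O ->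
  Rabs (gb - ga) <=
  Rabs (SA K - ga) + Rabs (SB K - gb) + (2 * INR K + 1) * e + 2 * sumN K w + w O.
Proof.
  intros HA HB H0.
  assert (Hsum : forall X : nat -> R, (forall k, (k < K)%nat -> Rabs (X (S k) - X k) <= e + w k) ->
            Rabs (X O - X K) <= e * INR K + sumN K w).
  { intros X HX. eapply Rle_trans; [apply Rabs_sub_le_sumN_steps|].
    rewrite <- sumN_const, <- sumN_add. now apply sumN_le. }
  pose proof (Hsum SA HA). pose proof (Hsum SB HB).
  assert (Htri : forall u v x y z t : R,
    Rabs (t - u) <= Rabs (v - u) + Rabs (x - v) + Rabs (x - y) + Rabs (y - z) + Rabs (z - t))
    by (intros; unfold Rabs; repeat destruct Rcase_abs; lra).
  pose proof (Htri ga (SA K) (SA O) (SB O) (SB K) gb). rewrite (Rabs_minus_sym (SB K)) in *.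
  lra.
Qed.

Definition dyadic (L : R) (k : nat) : R := L / 8 * (/ 2) ^ k.

Lemma dyadic_pos L k : 0 < L -> 0 < dyadic L k.
Proof. intros. apply Rmult_lt_0_compat; [lra|apply pow_lt; lra]. Qed.

Lemma dyadic_0 L : dyadic L 0 = L / 8.
Proof. unfold dyadic. simpl. ring. Qed.

Lemma dyadic_S L k : dyadic L (S k) = dyadic L k / 2.
Proof. unfold dyadic. simpl. field. Qed.

Lemma dyadic_antimono L k j : 0 < L -> (k <= j)%nat -> dyadic L j <= dyadic L k.
Proof.
  intros HL Hkj. induction Hkj as [|j _ IH]; [lra|].
  rewrite dyadic_S. pose proof (dyadic_pos L j HL). lra.
Qed.

Lemma dyadic_series_le p L rho K : 2 < p -> 0 < L -> 0 < rho ->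
  2 * sumN K (fun k => gap_const p * Rpower (dyadic L k) (holder_exp p) * rho)
  + gap_const p * Rpower (dyadic L 0) (holder_exp p) * rho
  <= holder_const p * Rpower L (holder_exp p) * rho / 2.
Proof.
  intros Hp HL Hrho. pose proof (holder_exp_pos p Hp) as Hs.
  set (s := holder_exp p) in *. pose proof (Rpower_half_lt_1 s Hs) as Hq.
  set (q := Rpower (/ 2) s) in *. pose proof (gap_const_pos p) as HQ.
  set (Q := gap_const p) in *. pose proof (Rpower_pos (L / 8) s).
  assert (HX : 0 <= Q * rho * Rpower (L / 8) s)
    by (apply Rmult_le_pos; [apply Rmult_le_pos|]; lra).
  set (M := Q * rho * Rpower (L / 8) s / (1 - q)).
  assert (Hsum : sumN K (fun k => Q * Rpower (dyadic L k) s * rho) <= M).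
  { rewrite (sumN_ext K _ (fun k => (Q * rho * Rpower (L / 8) s) * q ^ k))
      by (intros; unfold dyadic, q; rewrite Rpower_mul_half_pow by lra; ring).
    rewrite sumN_scal. unfold M, Rdiv. apply Rmult_le_compat_l; [exact HX|].
    now apply sumN_geom_le. }
  assert (Hfirst : Q * Rpower (dyadic L 0) s * rho <= M).
  { rewrite dyadic_0. unfold M.
    replace (Q * Rpower (L / 8) s * rho) with (Q * rho * Rpower (L / 8) s * 1) by ring.
    apply Rmult_le_compat_l; [exact HX|]. rewrite <- Rinv_1 at 1. apply Rinv_le_contravar; lra. }
  assert (HM : M <= holder_const p * Rpower L s * rho / 6).
  { unfold M, holder_const. fold s q Q.
    assert (Rpower (L / 8) s <= Rpower L s) by (apply Rle_Rpower_l; lra).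
    replace (6 * Q / (1 - q) * Rpower L s * rho / 6) with (Q * rho * Rpower L s / (1 - q))
      by (field; lra).
    unfold Rdiv. apply Rmult_le_compat_r; [left; apply Rinv_0_lt_compat; lra|].
    apply Rmult_le_compat_l; nra. }
  lra.
Qed.

Section HolderEstimate.

Variables (p : R) (g : R -> R) (r rho : R).
Hypotheses (Hp : 2 < p) (Hrho : 0 < rho) (Hr_rho : r <= Rpower rho p)
  (Hr : forall K, lower_sums (besov_integrand p g) K -> K <= r).

(* Chebyshev at level [tau = l^(1-2/p) rho] in [weighted_avg_sub_le]; the
   remainder is a lower sum of the Besov integral. *)
Lemma grid_avg_gap Rr N lo1 hi1 lo2 hi2 eps l :
  0 < Rr -> (0 < N)%nat -> 0 < l -> (lo1 < hi1 <= N)%nat -> (lo2 < hi2 <= N)%nat ->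
  l / 4 <= (INR hi1 - INR lo1) * mesh Rr N -> l / 4 <= (INR hi2 - INR lo2) * mesh Rr N ->
  grid_pt Rr N hi1 < grid_pt Rr N lo2 -> grid_pt Rr N hi2 - grid_pt Rr N lo1 <= 4 * l ->
  grid_osc_le g Rr N lo1 hi1 eps -> grid_osc_le g Rr N lo2 hi2 eps ->
  Rabs (avg N lo1 hi1 (fun k => g (grid_pt Rr N k)) - avg N lo2 hi2 (fun k => g (grid_pt Rr N k)))
  <= 2 * eps + gap_const p * Rpower l (holder_exp p) * rho.
Proof.
  intros HR HN Hl H1 H2 Hlen1 Hlen2 Hsep Hspan Hosc1 Hosc2.
  pose proof (mesh_pos Rr N HR HN) as Hh. set (h := mesh Rr N) in *.
  set (tau := Rpower l (holder_exp p) * rho).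
  assert (Htau : 0 < tau) by (apply Rmult_lt_0_compat; [apply Rpower_pos|exact Hrho]).
  set (n1 := INR hi1 - INR lo1) in *. set (n2 := INR hi2 - INR lo2) in *.
  assert (Hn1 : sumN N (indic lo1 hi1) = n1) by (apply sumN_indic; lia).
  assert (Hn2 : sumN N (indic lo2 hi2) = n2) by (apply sumN_indic; lia).
  assert (0 < n1) by (apply Rlt_0_minus, lt_INR; lia).
  assert (0 < n2) by (apply Rlt_0_minus, lt_INR; lia).
  unfold avg. eapply Rle_trans.
  { apply (weighted_avg_sub_le p N _ _ _ eps tau); [lra|exact Htau|apply indic_nonneg
          |apply indic_nonneg|lra|lra]. }
  rewrite Hn1, Hn2.
  set (Z := sumN N (fun i => sumN N (fun j => indic lo1 hi1 i * indic lo2 hi2 j *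
              rpow (excess eps (fun k => g (grid_pt Rr N k)) i j) p))).
  pose proof (lower_sum_excess_le p g r Rr N lo1 hi1 lo2 hi2 eps (4 * l)
                ltac:(lra) HR HN Hr Hsep Hspan Hosc1 Hosc2) as HZ. fold h Z in HZ.
  pose proof (Rpower_pos (4 * l) p). pose proof (Rpower_pos 4 p).
  pose proof (Rpower_pos tau (p - 1)).
  assert (HZ' : Z * (h * h) <= Rpower 4 p * (l * l) * (tau * Rpower tau (p - 1))).
  { rewrite <- Rpower_succ by exact Htau. unfold tau. rewrite <- Rpower_holder_scale by lra.
    apply Rmult_le_reg_r with (/ Rpower (4 * l) p); [now apply Rinv_0_lt_compat|].
    replace (Rpower (4 * l) p * Rpower rho p * / Rpower (4 * l) p) with (Rpower rho p)
      by (field; lra). eapply Rle_trans; [|exact Hr_rho].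
    unfold Rdiv in HZ. replace (Z * (h * h) * / Rpower (4 * l) p)
      with (h * h * / Rpower (4 * l) p * Z) by ring. exact HZ. }
  enough (Z / (n1 * n2 * Rpower tau (p - 1)) <= 16 * Rpower 4 p * tau)
    by (unfold gap_const; replace ((1 + 16 * Rpower 4 p) * Rpower l (holder_exp p) * rho)
        with (tau + 16 * Rpower 4 p * tau) by (unfold tau; ring); clearbody tau Z; lra).
  apply (remainder_le Z h n1 n2 l); auto; lra.
Qed.

Lemma grid_interval_avg_gap Rr N lo1 hi1 lo2 hi2 u1 v1 u2 v2 a b d eps l :
  (forall x y, a <= x <= b -> a <= y <= b -> Rabs (x - y) < d -> Rabs (g x - g y) < eps) ->
  0 < Rr -> (0 < N)%nat -> mesh Rr N < d -> 0 < l ->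
  grid_interval_in Rr N lo1 hi1 u1 v1 -> grid_interval_in Rr N lo2 hi2 u2 v2 ->
  l / 2 <= v1 - u1 -> l / 2 <= v2 - u2 -> v1 < u2 -> v2 - u1 <= 4 * l ->
  a <= u1 -> v2 <= b ->
  Rabs (avg N lo1 hi1 (fun k => g (grid_pt Rr N k)) - avg N lo2 hi2 (fun k => g (grid_pt Rr N k)))
  <= 2 * eps + gap_const p * Rpower l (holder_exp p) * rho.
Proof.
  intros Hu HR HN Hd Hl (H1 & Hlo1 & Hhi1 & Hlen1) (H2 & Hlo2 & Hhi2 & Hlen2)
    Hl1 Hl2 Hsep Hspan Ha Hb.
  assert (grid_pt Rr N lo1 <= grid_pt Rr N hi1) by (apply grid_pt_le; auto; lia).
  assert (grid_pt Rr N lo2 <= grid_pt Rr N hi2) by (apply grid_pt_le; auto; lia).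
  apply grid_avg_gap; auto; try lra;
    apply (grid_osc_le_of_unif_cont g a b d); auto; lra.
Qed.

(* [SA k] and [SB k] are averages of [g] over grid intervals inside
   [[a + 2 l, a + 3 l]] and [[b - 3 l, b - 2 l]], where [l = dyadic (b - a) k]. *)
Lemma dyadic_averages a b K eps d Rr N :
  a < b ->
  (forall x y, a <= x <= b -> a <= y <= b -> Rabs (x - y) < d -> Rabs (g x - g y) < eps) ->
  0 < Rr -> (0 < N)%nat -> - Rr < a -> b < Rr -> mesh Rr N < d ->
  4 * mesh Rr N <= dyadic (b - a) K ->
  let w k := gap_const p * Rpower (dyadic (b - a) k) (holder_exp p) * rho in
  exists SA SB : nat -> R,
    (forall k, (k < K)%nat -> Rabs (SA (S k) - SA k) <= 2 * eps + w k) /\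
    (forall k, (k < K)%nat -> Rabs (SB (S k) - SB k) <= 2 * eps + w k) /\
    Rabs (SA O - SB O) <= 2 * eps + w O /\
    (forall eta, (forall x, a <= x <= a + 3 * dyadic (b - a) K -> Rabs (g x - g a) <= eta) ->
       Rabs (SA K - g a) <= eta) /\
    (forall eta, (forall x, b - 3 * dyadic (b - a) K <= x <= b -> Rabs (g x - g b) <= eta) ->
       Rabs (SB K - g b) <= eta).
Proof.
  intros Hab Hu HR HN HaR HbR Hd Hmesh w.
  set (l := dyadic (b - a)).
  assert (Hl : forall k, 0 < l k) by (intros; apply dyadic_pos; lra).
  assert (Hlb : forall k, l k <= (b - a) / 8)
    by (intros; rewrite <- dyadic_0; apply dyadic_antimono; lia || lra).
  assert (Hm : forall k, (k <= K)%nat -> 4 * mesh Rr N <= l k)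
    by (intros k Hk; pose proof (dyadic_antimono (b - a) k K ltac:(lra) Hk); unfold l; lra).
  pose proof (mesh_pos Rr N HR HN).
  destruct (grid_intervals_inside Rr N (fun k => a + 2 * l k) (fun k => a + 3 * l k) K HR HN)
    as (loA & hiA & HA); [intros k Hk; pose proof (Hm k Hk); pose proof (Hlb k); lra|].
  destruct (grid_intervals_inside Rr N (fun k => b - 3 * l k) (fun k => b - 2 * l k) K HR HN)
    as (loB & hiB & HB); [intros k Hk; pose proof (Hm k Hk); pose proof (Hlb k); lra|].
  set (G := fun k => g (grid_pt Rr N k)).
  exists (fun k => avg N (loA k) (hiA k) G), (fun k => avg N (loB k) (hiB k) G).
  assert (Hnear : forall lo hi u v c eta, grid_interval_in Rr N lo hi u v ->
            (forall x, u <= x <= v -> Rabs (g x - c) <= eta) -> Rabs (avg N lo hi G - c) <= eta).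
  { intros lo hi u v c eta (Hlh & Hu' & Hv' & _) Heta. apply avg_near; [exact Hlh|].
    intros i Hi. apply Heta.
    assert (grid_pt Rr N lo <= grid_pt Rr N i) by (apply grid_pt_le; auto; lia).
    assert (grid_pt Rr N i <= grid_pt Rr N hi) by (apply grid_pt_le; auto; lia). lra. }
  repeat split.
  - intros k Hk. pose proof (HA (S k) ltac:(lia)) as HAS. cbv beta in HAS.
    unfold l in HAS. rewrite dyadic_S in HAS. fold (l k) in HAS.
    pose proof (Hl k). pose proof (Hlb k).
    apply (grid_interval_avg_gap Rr N _ _ _ _ _ _ _ _ a b d eps (l k) Hu HR HN Hd (Hl k)
             HAS (HA k ltac:(lia))); lra.
  - intros k Hk. pose proof (HB (S k) ltac:(lia)) as HBS. cbv beta in HBS.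
    unfold l in HBS. rewrite dyadic_S in HBS. fold (l k) in HBS.
    pose proof (Hl k). pose proof (Hlb k).
    rewrite Rabs_minus_sym.
    apply (grid_interval_avg_gap Rr N _ _ _ _ _ _ _ _ a b d eps (l k) Hu HR HN Hd (Hl k)
             (HB k ltac:(lia)) HBS); lra.
  - pose proof (dyadic_0 (b - a)). fold (l O) in *.
    apply (grid_interval_avg_gap Rr N _ _ _ _ _ _ _ _ a b d eps (l O) Hu HR HN Hd (Hl O)
             (HA O ltac:(lia)) (HB O ltac:(lia))); lra.
  - intros eta Heta. apply (Hnear _ _ _ _ _ _ (HA K (le_n K))). intros x Hx. apply Heta.
    pose proof (Hl K). fold (l K). lra.
  - intros eta Heta. apply (Hnear _ _ _ _ _ _ (HB K (le_n K))). intros x Hx. apply Heta.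
    pose proof (Hl K). fold (l K). lra.
Qed.

Hypothesis Hg : continuity g.

(* The discretisation error [eps] and the scale [dyadic (b - a) K] at which
   the averages are within [|g b - g a| / 8] of [g a] and [g b] both come from
   uniform continuity of [g] on [[a, b]]. *)
Lemma besov_holder_rho a b : a < b ->
  Rabs (g b - g a) <= holder_const p * Rpower (b - a) (holder_exp p) * rho.
Proof.
  intros Hab. set (al := Rabs (g b - g a)).
  destruct (Rle_lt_dec al 0) as [H0|Hal].
  { pose proof (holder_const_pos p Hp). pose proof (Rpower_pos (b - a) (holder_exp p)).
    enough (0 < holder_const p * Rpower (b - a) (holder_exp p) * rho) by lra.
    apply Rmult_lt_0_compat; [nra|exact Hrho]. }
  assert (Hcpt : forall x, a <= x <= b -> continuity_pt g x) by (intros; apply Hg).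
  destruct (Heine_cor2 Hcpt (mkposreal (al / 8) ltac:(lra))) as [d1 Hd1]. simpl in Hd1.
  destruct (pow_lt_1_zero (/ 2) ltac:(rewrite Rabs_right; lra) (d1 / (3 * ((b - a) / 8))))
    as [K HK]; [apply Rdiv_lt_0_compat; [apply cond_pos|lra]|].
  specialize (HK K (le_n K)). rewrite Rabs_right in HK by (apply Rle_ge, pow_le; lra).
  assert (HlK : 3 * dyadic (b - a) K < d1).
  { unfold dyadic. apply Rmult_lt_compat_l with (r := 3 * ((b - a) / 8)) in HK; [|lra].
    replace (3 * ((b - a) / 8) * (d1 / (3 * ((b - a) / 8)))) with (pos d1) in HK
      by (field; lra). lra. }
  set (eps := al / (8 * (2 * INR K + 1))).
  assert (Heps : 0 < eps) by (apply Rdiv_lt_0_compat; [lra|pose proof (pos_INR K); lra]).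
  destruct (Heine_cor2 Hcpt (mkposreal eps Heps)) as [d2 Hd2]. simpl in Hd2.
  pose proof (dyadic_pos (b - a) K ltac:(lra)).
  destruct (exists_fine_grid a b (Rmin (dyadic (b - a) K / 4) d2))
    as (Rr & N & HR & HN & HaR & HbR & Hh).
  { apply Rmin_pos; [lra|apply cond_pos]. }
  pose proof (Rmin_l (dyadic (b - a) K / 4) d2). pose proof (Rmin_r (dyadic (b - a) K / 4) d2).
  destruct (dyadic_averages a b K eps d2 Rr N Hab Hd2 HR HN HaR HbR ltac:(lra) ltac:(lra))
    as (SA & SB & StepA & StepB & StepM & EndA & EndB).
  pose proof (chain_bound SA SB _ K (2 * eps) (g a) (g b) StepA StepB StepM) as Hchain.
  assert (3 * dyadic (b - a) K <= b - a)
    by (pose proof (dyadic_antimono (b - a) 0 K ltac:(lra) ltac:(lia)); rewrite dyadic_0 in *; lra).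
  assert (Rabs (SA K - g a) <= al / 8).
  { apply EndA. intros x Hx. left. apply Hd1; try lra. rewrite Rabs_right; lra. }
  assert (Rabs (SB K - g b) <= al / 8).
  { apply EndB. intros x Hx. left. apply Hd1; try lra. rewrite Rabs_left1; lra. }
  assert ((2 * INR K + 1) * (2 * eps) = al / 4)
    by (unfold eps; field; pose proof (pos_INR K); lra).
  pose proof (dyadic_series_le p (b - a) rho K Hp ltac:(lra) Hrho).
  fold al in Hchain. clearbody eps al. lra.
Qed.

End HolderEstimate.

Lemma besov_holder p g a b r : 2 < p -> continuity g -> a < b ->
  integral2 (besov_integrand p g) = Fin r ->
  Rabs (g b - g a) <= holder_const p * Rpower (b - a) (holder_exp p) * rpow r (1 / p).
Proof.
  intros Hp Hg Hab Hint.
  assert (Hr : forall K, lower_sums (besov_integrand p g) K -> K <= r)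
    by (intros K; now apply integral2_lower_sum_le).
  destruct (Rlt_dec 0 r) as [Hpos|Hzero].
  - rewrite rpow_pos by exact Hpos.
    apply (besov_holder_rho p g r); auto; [apply Rpower_pos|].
    rewrite Rpower_mult. replace (1 / p * p) with 1 by (field; lra). rewrite Rpower_1; lra.
  - assert (r = 0) as -> by (pose proof (integral2_nonneg _ _ Hint); lra).
    unfold rpow. destruct (Rlt_dec 0 0); [lra|]. rewrite Rmult_0_r.
    apply Rnot_lt_le. intros Hgap.
    set (K := holder_const p * Rpower (b - a) (holder_exp p)).
    assert (HK : 0 < K)
      by (pose proof (holder_const_pos p Hp); pose proof (Rpower_pos (b - a) (holder_exp p));
          unfold K; nra).
    set (rho := Rabs (g b - g a) / (2 * (K + 1))).
    assert (Hrho : 0 < rho) by (apply Rdiv_lt_0_compat; lra).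
    assert (Rabs (g b - g a) <= K * rho).
    { apply (besov_holder_rho p g 0); auto; left; apply Rpower_pos. }
    assert (K * rho < Rabs (g b - g a)).
    { unfold rho. apply Rmult_lt_reg_r with (2 * (K + 1)); [lra|].
      replace (K * (Rabs (g b - g a) / (2 * (K + 1))) * (2 * (K + 1)))
        with (K * Rabs (g b - g a)) by (field; lra). nra. }
    lra.
Qed.

Lemma besov_holder_dist p g x y r : 2 < p -> continuity g -> x <> y ->
  integral2 (besov_integrand p g) = Fin r ->
  Rabs (g x - g y) <= holder_const p * Rpower (Rabs (x - y)) (holder_exp p) * rpow r (1 / p).
Proof.
  intros Hp Hg Hxy Hint. destruct (Rlt_dec x y) as [Hlt|Hge].
  - rewrite Rabs_minus_sym, (Rabs_minus_sym x), (Rabs_right (y - x)) by lra.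
    now apply besov_holder.
  - rewrite (Rabs_right (x - y)) by lra. apply besov_holder; auto. lra.
Qed.

(** * Chords in a rotated chart *)

Lemma unit_sub_add_sq X1 Y1 X2 Y2 : X1 ^ 2 + Y1 ^ 2 = 1 -> X2 ^ 2 + Y2 ^ 2 = 1 ->
  ((X1 - X2) ^ 2 + (Y1 - Y2) ^ 2) * ((X1 + X2) ^ 2 + (Y1 + Y2) ^ 2) = 4 * (X1 * Y2 - Y1 * X2) ^ 2.
Proof.
  intros H1 H2.
  transitivity (((X1 ^ 2 + Y1 ^ 2) + (X2 ^ 2 + Y2 ^ 2)) ^ 2 - 4 * (X1 * X2 + Y1 * Y2) ^ 2); [ring|].
  rewrite H1, H2.
  transitivity (4 * ((X1 ^ 2 + Y1 ^ 2) * (X2 ^ 2 + Y2 ^ 2)) - 4 * (X1 * X2 + Y1 * Y2) ^ 2);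
    [rewrite H1, H2|]; ring.
Qed.

Definition cross (u w : R * R) : R := fst u * snd w - snd u * fst w.

Definition sqnorm (u : R * R) : R := fst u ^ 2 + snd u ^ 2.

Lemma pow2_pos x : x <> 0 -> 0 < x ^ 2.
Proof. intros Hx. pose proof (Rsqr_pos_lt x Hx). unfold Rsqr in *. simpl. lra. Qed.

Lemma sqnorm_pos u : u <> (0, 0) -> 0 < sqnorm u.
Proof.
  destruct u as [x y]. unfold sqnorm. simpl. intros Hne.
  destruct (Req_dec x 0) as [->|Hx]; [destruct (Req_dec y 0) as [->|Hy]; [easy|]|].
  - pose proof (pow2_pos y Hy). lra.
  - pose proof (pow2_pos x Hx). pose proof (pow2_ge_0 y). lra.
Qed.

Lemma vsub_neq_0 P P' : P <> P' -> vsub P P' <> (0, 0).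
Proof.
  destruct P as [x y], P' as [x' y']. unfold vsub. simpl. intros Hne Heq.
  injection Heq as Hx Hy. apply Hne. f_equal; lra.
Qed.

(* [|u - v| |u + v| = 2 |sin(u, v)|] for the unit directions of two chords. *)
Lemma unit_dir_sub_add_sq x1 x2 y1 y2 : x1 <> x2 -> y1 <> y2 ->
  norm2 (vsub (unit_dir x1 x2) (unit_dir y1 y2)) ^ 2 *
  norm2 (vadd (unit_dir x1 x2) (unit_dir y1 y2)) ^ 2
  = 4 * cross (vsub x1 x2) (vsub y1 y2) ^ 2 / (sqnorm (vsub x1 x2) * sqnorm (vsub y1 y2)).
Proof.
  intros Hx Hy. pose proof (sqnorm_pos _ (vsub_neq_0 _ _ Hx)) as Hd.
  pose proof (sqnorm_pos _ (vsub_neq_0 _ _ Hy)) as He.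
  unfold unit_dir, cross, sqnorm in *. cbv zeta.
  set (d := vsub x1 x2) in *. set (e := vsub y1 y2) in *. clearbody d e.
  assert (Hsq : forall u, norm2 u ^ 2 = fst u ^ 2 + snd u ^ 2)
    by (intros; apply pow2_sqrt, Rplus_le_le_0_compat; apply pow2_ge_0).
  assert (Hn0 : norm2 d <> 0) by (intros Z; rewrite <- (Hsq d), Z, pow_i in Hd by lia; lra).
  assert (Hm0 : norm2 e <> 0) by (intros Z; rewrite <- (Hsq e), Z, pow_i in He by lia; lra).
  rewrite !Hsq. simpl fst; simpl snd.
  rewrite unit_sub_add_sq.
  - rewrite <- !Hsq. field. auto.
  - replace ((fst d / norm2 d) ^ 2 + (snd d / norm2 d) ^ 2)
      with ((fst d ^ 2 + snd d ^ 2) / norm2 d ^ 2) by (field; auto).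
    rewrite Hsq. field. lra.
  - replace ((fst e / norm2 e) ^ 2 + (snd e / norm2 e) ^ 2)
      with ((fst e ^ 2 + snd e ^ 2) / norm2 e ^ 2) by (field; auto).
    rewrite Hsq. field. lra.
Qed.

Lemma sqnorm_vsub_coords a th b P P' :
  sqnorm (vsub (coords a th b P) (coords a th b P')) = sqnorm (vsub P P').
Proof.
  unfold sqnorm, vsub, coords. simpl. pose proof (sin2_cos2 th) as Hcs. unfold Rsqr in Hcs.
  assert (Hsg : (if b then 1 else -1) * (if b then 1 else -1) = 1) by (destruct b; ring).
  set (sg := if b then 1 else -1) in *. set (u := fst P - fst a). set (u' := fst P' - fst a).
  set (w := snd P - snd a). set (w' := snd P' - snd a).
  replace (fst P - fst P') with (u - u') by (unfold u, u'; ring).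
  replace (snd P - snd P') with (w - w') by (unfold w, w'; ring).
  transitivity (((u - u') ^ 2 + (w - w') ^ 2) * (sin th * sin th + cos th * cos th)
      + (sg * sg - 1) * (- (u - u') * sin th + (w - w') * cos th) ^ 2); [ring|].
  rewrite Hcs, Hsg. ring.
Qed.

Lemma cross_vsub_coords_sq a th b P P' Q Q' :
  cross (vsub (coords a th b P) (coords a th b P')) (vsub (coords a th b Q) (coords a th b Q')) ^ 2
  = cross (vsub P P') (vsub Q Q') ^ 2.
Proof.
  unfold cross, vsub, coords. simpl. pose proof (sin2_cos2 th) as Hcs. unfold Rsqr in Hcs.
  assert (Hsg : (if b then 1 else -1) * (if b then 1 else -1) = 1) by (destruct b; ring).
  set (sg := if b then 1 else -1) in *.
  set (X := (fst P - fst P') * (snd Q - snd Q') - (snd P - snd P') * (fst Q - fst Q')).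
  transitivity (X ^ 2 * (sg * sg) * (sin th * sin th + cos th * cos th) ^ 2); [unfold X; ring|].
  rewrite Hcs, Hsg. ring.
Qed.

(* By the mean value theorem, the slope of a chord of the graph of [phi] is a
   value of [dphi]; the chord is not vertical because [coords] is an isometry. *)
Lemma chord_slope a th b phi dphi P P' :
  (forall x, derivable_pt_lim phi x (dphi x)) ->
  snd (coords a th b P) = phi (fst (coords a th b P)) ->
  snd (coords a th b P') = phi (fst (coords a th b P')) -> P <> P' ->
  exists xi,
    (fst (coords a th b P) < xi < fst (coords a th b P') \/
     fst (coords a th b P') < xi < fst (coords a th b P)) /\
    fst (vsub (coords a th b P) (coords a th b P')) <> 0 /\
    snd (vsub (coords a th b P) (coords a th b P')) =
      dphi xi * fst (vsub (coords a th b P) (coords a th b P')).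
Proof.
  intros Hd HP HP' Hne. unfold vsub. cbn [fst snd]. rewrite HP, HP'.
  set (z := fst (coords a th b P)). set (z' := fst (coords a th b P')).
  assert (Hz : z - z' <> 0).
  { intros Hzz. pose proof (sqnorm_pos _ (vsub_neq_0 _ _ Hne)) as Hpos.
    rewrite <- sqnorm_vsub_coords with (a := a) (th := th) (b := b) in Hpos.
    unfold sqnorm, vsub in Hpos. cbn [fst snd] in Hpos. rewrite HP, HP' in Hpos. fold z z' in Hpos.
    replace z with z' in Hpos by lra. rewrite Rminus_diag, !pow_i in Hpos by lia. lra. }
  destruct (Rlt_dec z z') as [Hlt|Hge].
  - destruct (MVT_cor2 phi dphi z z' Hlt (fun c _ => Hd c)) as (xi & E & Hxi).
    exists xi. repeat split; [auto|auto|lra].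
  - destruct (MVT_cor2 phi dphi z' z ltac:(lra) (fun c _ => Hd c)) as (xi & E & Hxi).
    exists xi. repeat split; [auto|auto|lra].
Qed.

(* [c''^4 < |u - v|^2 |u + v|^2 = 4 sin^2], and in the chart the sine of the
   angle between chords of slopes [s1], [s2] is at most [|s1 - s2|]. *)
Lemma slope_gap_of_directions c'' a th b x1 x2 y1 y2 s1 s2 :
  0 < c'' -> x1 <> x2 -> y1 <> y2 ->
  Rmin (norm2 (vsub (unit_dir x1 x2) (unit_dir y1 y2)))
       (norm2 (vadd (unit_dir x1 x2) (unit_dir y1 y2))) > c'' ->
  let D := vsub (coords a th b x1) (coords a th b x2) in
  let E := vsub (coords a th b y1) (coords a th b y2) in
  fst D <> 0 -> fst E <> 0 -> snd D = s1 * fst D -> snd E = s2 * fst E ->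
  c'' * c'' / 2 < Rabs (s1 - s2).
Proof.
  intros Hc Hx Hy Hmin D E HD HE HsD HsE.
  set (A := norm2 (vsub (unit_dir x1 x2) (unit_dir y1 y2))) in Hmin.
  set (B := norm2 (vadd (unit_dir x1 x2) (unit_dir y1 y2))) in Hmin.
  pose proof (Rmin_l A B). pose proof (Rmin_r A B).
  assert (Hlow : c'' ^ 4 < A ^ 2 * B ^ 2).
  { replace (c'' ^ 4) with (c'' ^ 2 * c'' ^ 2) by ring.
    apply Rmult_le_0_lt_compat; try nra. }
  unfold A, B in Hlow. rewrite unit_dir_sub_add_sq in Hlow by assumption.
  rewrite <- (cross_vsub_coords_sq a th b), <- (sqnorm_vsub_coords a th b x1),
    <- (sqnorm_vsub_coords a th b y1) in Hlow.
  fold D E in Hlow. unfold cross, sqnorm in Hlow. rewrite HsD, HsE in Hlow.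
  pose proof (pow2_pos _ HD). pose proof (pow2_pos _ HE).
  replace (4 * (fst D * (s2 * fst E) - s1 * fst D * fst E) ^ 2 /
           ((fst D ^ 2 + (s1 * fst D) ^ 2) * (fst E ^ 2 + (s2 * fst E) ^ 2)))
    with (4 * (s1 - s2) ^ 2 / ((1 + s1 ^ 2) * (1 + s2 ^ 2))) in Hlow by (field; split; nra).
  assert (4 * (s1 - s2) ^ 2 / ((1 + s1 ^ 2) * (1 + s2 ^ 2)) <= 4 * (s1 - s2) ^ 2).
  { assert (1 <= (1 + s1 ^ 2) * (1 + s2 ^ 2)) by nra.
    pose proof (pow2_ge_0 (s1 - s2)).
    assert (/ ((1 + s1 ^ 2) * (1 + s2 ^ 2)) <= 1)
      by (rewrite <- Rinv_1; apply Rinv_le_contravar; lra).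
    unfold Rdiv. nra. }
  rewrite <- (pow2_abs (s1 - s2)) in *. pose proof (Rabs_pos (s1 - s2)). nra.
Qed.

Lemma coords_fst_sub_le a th b q delta P P' :
  in_square q delta P -> in_square q delta P' ->
  Rabs (fst (coords a th b P) - fst (coords a th b P')) <= 2 * delta.
Proof.
  intros [[H1 H2] [H3 H4]] [[H5 H6] [H7 H8]].
  pose proof (sqnorm_vsub_coords a th b P P') as Hiso.
  unfold sqnorm, vsub in Hiso. cbn [fst snd] in Hiso.
  set (D := fst (coords a th b P) - fst (coords a th b P')) in *.
  set (D' := snd (coords a th b P) - snd (coords a th b P')) in *.
  enough (Rabs D <= Rabs (2 * delta)) by (rewrite (Rabs_right (2 * delta)) in * by lra; lra).
  apply Rsqr_le_abs_0. unfold Rsqr.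
  assert (Rabs (fst P - fst P') <= delta) by (apply Rabs_le; lra).
  assert (Rabs (snd P - snd P') <= delta) by (apply Rabs_le; lra).
  rewrite <- (pow2_abs (fst P - fst P')), <- (pow2_abs (snd P - snd P')) in Hiso.
  pose proof (Rabs_pos (fst P - fst P')). pose proof (Rabs_pos (snd P - snd P')).
  pose proof (pow2_ge_0 D'). nra.
Qed.

Lemma besov_fn_norm_rough p c'' q delta E0 a th b phi dphi r :
  2 < p -> 0 < c'' ->
  (forall x, derivable_pt_lim phi x (dphi x)) -> continuity dphi ->
  (forall P, E0Q E0 q delta P -> snd (coords a th b P) = phi (fst (coords a th b P))) ->
  (exists x1 x2 y1 y2,
     E0Q E0 q delta x1 /\ E0Q E0 q delta x2 /\
     E0Q E0 q delta y1 /\ E0Q E0 q delta y2 /\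
     x1 <> x2 /\ y1 <> y2 /\
     Rmin (norm2 (vsub (unit_dir x1 x2) (unit_dir y1 y2)))
          (norm2 (vadd (unit_dir x1 x2) (unit_dir y1 y2))) > c'') ->
  integral2 (besov_integrand p dphi) = Fin r ->
  c'' * c'' / 2 <= holder_const p * Rpower (2 * delta) (holder_exp p) * rpow r (1 / p).
Proof.
  intros Hp Hc Hd Hcont Hgraph (x1 & x2 & y1 & y2 & Hx1 & Hx2 & Hy1 & Hy2 & Hx & Hy & Hmin) Hint.
  destruct (chord_slope a th b phi dphi x1 x2 Hd (Hgraph _ Hx1) (Hgraph _ Hx2) Hx)
    as (xi1 & Hxi1 & HD & HsD).
  destruct (chord_slope a th b phi dphi y1 y2 Hd (Hgraph _ Hy1) (Hgraph _ Hy2) Hy)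
    as (xi2 & Hxi2 & HE & HsE).
  pose proof (slope_gap_of_directions c'' a th b x1 x2 y1 y2 _ _ Hc Hx Hy Hmin HD HE HsD HsE)
    as Hgap.
  assert (Hne : xi1 <> xi2).
  { intros <-. rewrite Rminus_diag, Rabs_R0 in Hgap. nra. }
  destruct Hx1 as [_ Sx1], Hx2 as [_ Sx2], Hy1 as [_ Sy1], Hy2 as [_ Sy2].
  assert (Hdist : Rabs (xi1 - xi2) <= 2 * delta).
  { pose proof (coords_fst_sub_le a th b q delta x1 y1 Sx1 Sy1).
    pose proof (coords_fst_sub_le a th b q delta x1 y2 Sx1 Sy2).
    pose proof (coords_fst_sub_le a th b q delta x2 y1 Sx2 Sy1).
    pose proof (coords_fst_sub_le a th b q delta x2 y2 Sx2 Sy2).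
    revert Hxi1 Hxi2. unfold Rabs in *. repeat destruct Rcase_abs; lra. }
  pose proof (besov_holder_dist p dphi xi1 xi2 r Hp Hcont Hne Hint) as Hhol.
  assert (Rpower (Rabs (xi1 - xi2)) (holder_exp p) <= Rpower (2 * delta) (holder_exp p)).
  { apply Rle_Rpower_l; [apply Rlt_le, holder_exp_pos, Hp|].
    split; [apply Rabs_pos_lt; lra|exact Hdist]. }
  pose proof (holder_const_pos p Hp). pose proof (rpow_nonneg r (1 / p)).
  assert (holder_const p * Rpower (Rabs (xi1 - xi2)) (holder_exp p) * rpow r (1 / p)
          <= holder_const p * Rpower (2 * delta) (holder_exp p) * rpow r (1 / p))
    by (apply Rmult_le_compat_r; [lra|]; apply Rmult_le_compat_l; lra).
  lra.
Qed.

Lemma ER_le_Fin_trans x y v : y <= x -> ER_le (Fin x) v -> ER_le (Fin y) v.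
Proof. destruct v; simpl; [lra|auto]. Qed.

Lemma Rpower_scale_exp delta p : 0 < delta ->
  Rpower delta (2 / p - 1) = / Rpower delta (holder_exp p).
Proof. intros. rewrite <- Rpower_Ropp. f_equal. unfold holder_exp. ring. Qed.

Lemma besov_set_norm_rough p c'' E0 q delta :
  2 < p -> 0 < c'' -> 0 < delta ->
  (exists x1 x2 y1 y2,
     E0Q E0 q delta x1 /\ E0Q E0 q delta x2 /\
     E0Q E0 q delta y1 /\ E0Q E0 q delta y2 /\
     x1 <> x2 /\ y1 <> y2 /\
     Rmin (norm2 (vsub (unit_dir x1 x2) (unit_dir y1 y2)))
          (norm2 (vadd (unit_dir x1 x2) (unit_dir y1 y2))) > c'') ->
  ER_le (Fin (c'' * c'' / 2 / (holder_const p * Rpower 2 (holder_exp p))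
              * Rpower delta (2 / p - 1)))
        (besov_set_norm p (E0Q E0 q delta)).
Proof.
  intros Hp Hc Hdelta Hrough. apply ER_inf_ge.
  - intros r (a & th & b & phi & dphi & _ & _ & _ & Hv). unfold besov_fn_norm in Hv.
    destruct (integral2 (besov_integrand p dphi)); inversion Hv. apply rpow_nonneg.
  - intros w (a & th & b & phi & dphi & Hd & Hcont & Hgraph & ->). unfold besov_fn_norm.
    destruct (integral2 (besov_integrand p dphi)) as [r|] eqn:Hint; [simpl|exact I].
    pose proof (besov_fn_norm_rough p c'' q delta E0 a th b phi dphi r
                  Hp Hc Hd Hcont Hgraph Hrough Hint) as Hlow.
    rewrite <- Rpower_mult_distr in Hlow by lra. rewrite Rpower_scale_exp by exact Hdelta.
    pose proof (holder_const_pos p Hp). pose proof (Rpower_pos 2 (holder_exp p)).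
    pose proof (Rpower_pos delta (holder_exp p)).
    set (K := holder_const p * Rpower 2 (holder_exp p)).
    assert (HK : 0 < K) by (unfold K; nra).
    apply Rmult_le_reg_r with (K * Rpower delta (holder_exp p)); [nra|].
    replace (c'' * c'' / 2 / K * / Rpower delta (holder_exp p) * (K * Rpower delta (holder_exp p)))
      with (c'' * c'' / 2) by (field; lra).
    unfold K. lra.
Qed.

Theorem mainTheorem8 :
  forall p c c'' : R, 2 < p -> 0 < c -> 0 < c'' ->
  exists C : R, 0 < C /\
    forall (c' : R) (E0 : list (R * R)) (q : R * R) (delta : R),
      0 < c' -> 0 < delta ->
      rough p c c' c'' E0 q delta ->
      ER_le (Fin (/ C * Rpower delta (2 / p - 1)))
            (besov_set_norm p (E0Q E0 q delta)).
Proof.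
  intros p c c'' Hp Hc Hc''.
  set (k := c'' * c'' / 2 / (holder_const p * Rpower 2 (holder_exp p))).
  assert (Hk : 0 < k).
  { pose proof (holder_const_pos p Hp). pose proof (Rpower_pos 2 (holder_exp p)).
    apply Rdiv_lt_0_compat; nra. }
  pose proof (Rinv_0_lt_compat c Hc). pose proof (Rinv_0_lt_compat k Hk).
  exists (/ c + / k). split; [lra|].
  assert (Hle : forall x, 0 < x -> / x <= / c + / k -> / (/ c + / k) <= x).
  { intros x Hx Hlex. rewrite <- (Rinv_inv x). apply Rinv_le_contravar; [|exact Hlex].
    now apply Rinv_0_lt_compat. }
  intros c' E0 q delta Hc' Hdelta [Hdir|[Hbesov _]];
    pose proof (Rpower_pos delta (2 / p - 1)).
  - apply ER_le_Fin_trans with (k * Rpower delta (2 / p - 1));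
      [|now apply besov_set_norm_rough].
    apply Rmult_le_compat_r; [lra|]. apply Hle; lra.
  - apply ER_le_Fin_trans with (c * Rpower delta (2 / p - 1)); [|exact Hbesov].
    apply Rmult_le_compat_r; [lra|]. apply Hle; lra.
Qed.
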